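(* Let $f$ be a homeomorphism of a compact metric space $X$. If $f$ is positively finite-expansive and has the shadowing property, then $X$ is finite.
   Context: $f$ is positively finite-expansive if there is $c>0$ such that $W^s_c(x)=\{y\in X: d(f^n(x),f^n(y))\le c\ \forall n\ge 0\}$ is finite for every $x\in X$. Shadowing: for every $\varepsilon>0$ there is $\delta>0$ such that for every sequence $(x_k)_{k\in\mathbb{Z}}$ with $d(f(x_k),x_{k+1})<\delta$ for all $k$ there is $y$ with $d(f^k(y),x_k)<\varepsilon$ for all $k\in\mathbb{Z}$. *)

From Stdlib Require Import Reals List.
Open Scope R_scope.

Record is_metric {X : Type} (d : X -> X -> R) : Prop := {
  dist_nonneg : forall x y, 0 <= d x y;
  dist_eq0 : forall x y, d x y = 0 <-> x = y;
  dist_sym : forall x y, d x y = d y x;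
  dist_tri : forall x y z, d x z <= d x y + d y z
}.

Definition open_set {X : Type} (d : X -> X -> R) (U : X -> Prop) : Prop :=
  forall x, U x -> exists r, 0 < r /\ forall y, d x y < r -> U y.

Definition compact_space {X : Type} (d : X -> X -> R) : Prop :=
  forall (I : Type) (U : I -> X -> Prop),
    (forall i, open_set d (U i)) ->
    (forall x, exists i, U i x) ->
    exists l : list I, forall x, exists i, In i l /\ U i x.

Definition continuous_map {X : Type} (d : X -> X -> R) (f : X -> X) : Prop :=
  forall x eps, 0 < eps -> exists delta, 0 < delta /\
    forall y, d x y < delta -> d (f x) (f y) < eps.

Definition homeomorphism {X : Type} (d : X -> X -> R) (f : X -> X) : Prop :=
  continuous_map d f /\
  exists g : X -> X, continuous_map d g /\
    (forall x, g (f x) = x) /\ (forall x, f (g x) = x).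

Definition finite_pred {X : Type} (P : X -> Prop) : Prop :=
  exists l : list X, forall y, P y -> In y l.

Definition finite_type (X : Type) : Prop :=
  exists l : list X, forall y : X, In y l.

Definition stable_set {X : Type} (d : X -> X -> R) (f : X -> X) (c : R) (x : X)
  : X -> Prop :=
  fun y => forall n : nat, d (Nat.iter n f x) (Nat.iter n f y) <= c.

Definition pos_finite_expansive {X : Type} (d : X -> X -> R) (f : X -> X) : Prop :=
  exists c, 0 < c /\ forall x, finite_pred (stable_set d f c x).

(* f^k for k : Z, given f bijective with inverse g. *)
Definition zpow {X : Type} (f g : X -> X) (k : Z) (x : X) : X :=
  match k with
  | Z0 => x
  | Zpos p => Nat.iter (Pos.to_nat p) f x
  | Zneg p => Nat.iter (Pos.to_nat p) g x
  end.

Definition shadowing {X : Type} (d : X -> X -> R) (f g : X -> X) : Prop :=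
  forall eps, 0 < eps -> exists delta, 0 < delta /\
    forall xs : Z -> X, (forall k, d (f (xs k)) (xs (k + 1)%Z) < delta) ->
      exists y, forall k, d (zpow f g k y) (xs k) < eps.

From Pilot Require Import Defs.
From Stdlib Require Import Reals List.
From Stdlib Require Import Lra Lia Classical ZArith.
Open Scope R_scope.

(* Suppose X is infinite, let c be an expansivity constant
   (every stable set W^s_c(x) is finite) and let delta shadow
   (c/2)-accurately.  By compactness X has a finite delta-net P, so the
   union L of the stable sets W^s_c(p), p in P, is a finite list.
   Because X is infinite, finite expansivity yields a list S of more than
   |L| points whose forward orbits are pairwise c-separated at some time,
   and a single horizon n bounds all these separation times.  For a in S
   pick p in P with d(f^n a, p) < delta: the backward orbit of f^n a glued
   to the forward orbit of p is a delta-pseudo-orbit, so it is shadowed by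
   some y, which lies in W^s_c(p), hence in L, and whose backward orbit
   follows that of f^n a.  Two separated points of S cannot share such a
   y (triangle inequality at the separation time), so a |-> y injects S
   into L, contradicting |S| > |L|. *)

Lemma relation_image {A B : Type} (R : A -> B -> Prop) (l : list A) (L : list B) :
  NoDup l ->
  (forall a, In a l -> exists b, In b L /\ R a b) ->
  (forall a a' b, In a l -> In a' l -> R a b -> R a' b -> a = a') ->
  exists lb, NoDup lb /\ length lb = length l /\ incl lb L /\
    forall b, In b lb -> exists a, In a l /\ R a b.
Proof.
  induction l as [|a l IH]; intros Hnd Htot Hinj.
  - exists nil. repeat split; [constructor | intros b [] | intros b []].
  - apply NoDup_cons_iff in Hnd as [Ha Hnd].
    destruct (Htot a (or_introl eq_refl)) as [b [HbL Hab]].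
    destruct IH as [lb [Hndb [Hlen [Hincl Hpre]]]]; auto using in_cons.
    { intros x x' y Hx Hx'. apply Hinj; right; assumption. }
    exists (b :: lb). repeat split.
    + constructor; [|assumption]. intros Hb.
      destruct (Hpre b Hb) as [a' [Ha' Ha'b]].
      apply Ha. rewrite (Hinj a a' b); [assumption | left | right | ..]; auto.
    + simpl. rewrite Hlen. reflexivity.
    + intros y [<- | Hy]; auto.
    + intros y [<- | Hy].
      * exists a. split; [left|]; auto.
      * destruct (Hpre y Hy) as [a' [Ha' Hr]]. exists a'. split; [right|]; auto.
Qed.

Lemma relation_pigeonhole {A B : Type} (R : A -> B -> Prop) (l : list A) (L : list B) :
  NoDup l ->
  (forall a, In a l -> exists b, In b L /\ R a b) ->
  (forall a a' b, In a l -> In a' l -> R a b -> R a' b -> a = a') ->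
  (length l <= length L)%nat.
Proof.
  intros Hnd Htot Hinj.
  destruct (relation_image R l L Hnd Htot Hinj) as [lb [Hndb [Hlen [Hincl _]]]].
  rewrite <- Hlen. exact (NoDup_incl_length Hndb Hincl).
Qed.

Lemma finite_union {X I : Type} (P : I -> X -> Prop) (l : list I) :
  (forall i, finite_pred (P i)) ->
  exists L, forall i y, In i l -> P i y -> In y L.
Proof.
  intros Hfin. induction l as [|i l IH].
  - exists nil. intros i y [].
  - destruct IH as [L HL]. destruct (Hfin i) as [li Hli].
    exists (li ++ L). intros j y [<- | Hj] Hy; apply in_or_app; eauto.
Qed.

Lemma uniform_bound {A : Type} (Q : A -> nat -> Prop) (l : list A) :
  (forall a, In a l -> exists t, Q a t) ->
  exists n, forall a, In a l -> exists t, (t < n)%nat /\ Q a t.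
Proof.
  induction l as [|a l IH]; intros H.
  - exists 0%nat. intros x [].
  - destruct (H a (or_introl eq_refl)) as [t0 Ht0].
    destruct IH as [n0 Hn0]; [intros x Hx; apply H; right; assumption|].
    exists (Nat.max n0 (S t0)). intros x [<- | Hx].
    + exists t0. split; [lia | assumption].
    + destruct (Hn0 x Hx) as [t [Ht Hq]]. exists t. split; [lia | assumption].
Qed.

Section Dynamics.

Variables (X : Type) (d : X -> X -> R).
Hypothesis metric : is_metric d.

Lemma dist_refl (x : X) : d x x = 0.
Proof. apply (Defs.dist_eq0 d metric). reflexivity. Qed.

Lemma finite_net : compact_space d ->
  forall r, 0 < r -> exists P, forall x, exists p, In p P /\ d p x < r.
Proof.
  intros Hcomp r Hr.
  apply (Hcomp X (fun p x => d p x < r)).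
  - intros p x Hx. exists (r - d p x). split; [lra|].
    intros y Hy. pose proof (Defs.dist_tri d metric p x y). lra.
  - intros x. exists x. rewrite dist_refl. exact Hr.
Qed.

Lemma not_separated_of_common_near (z a b : X) (c : R) :
  d z a < c / 2 -> d z b < c / 2 -> d a b < c.
Proof.
  intros Ha Hb. pose proof (Defs.dist_tri d metric a z b).
  rewrite (Defs.dist_sym d metric a z) in *. lra.
Qed.

Variable f : X -> X.

Definition orbit_separated (c : R) (S : list X) : Prop :=
  forall a b, In a S -> In b S -> a <> b ->
    exists t, c < d (Nat.iter t f a) (Nat.iter t f b).

Lemma large_separated_family (c : R) : 0 <= c ->
  (forall x, finite_pred (stable_set d f c x)) -> ~ finite_type X ->
  forall m, exists S, length S = m /\ NoDup S /\ orbit_separated c S.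
Proof.
  intros Hc Hfin Hinf m. induction m as [|m [S [Hlen [Hnd Hsep]]]].
  - exists nil. repeat split; [constructor | intros a b []].
  - destruct (finite_union (stable_set d f c) S Hfin) as [L HL].
    assert (Hout : exists u, ~ In u L).
    { apply NNPP. intros Hno. apply Hinf. exists L.
      intros y. apply NNPP. intros Hy. apply Hno. exists y. exact Hy. }
    destruct Hout as [u Hu].
    assert (Hsu : forall s, In s S -> exists t, c < d (Nat.iter t f s) (Nat.iter t f u)).
    { intros s Hs. apply NNPP. intros Hno. apply Hu, (HL s u Hs).
      intros t. apply Rnot_lt_le. intros Ht. apply Hno. exists t. exact Ht. }
    exists (u :: S). repeat split.
    + simpl. rewrite Hlen. reflexivity.
    + constructor; [|assumption]. intros HuS. apply Hu, (HL u u HuS).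
      intros t. rewrite dist_refl. exact Hc.
    + intros a b [<- | Ha] [<- | Hb] Hab.
      * contradiction.
      * destruct (Hsu b Hb) as [t Ht]. exists t. rewrite (Defs.dist_sym d metric). exact Ht.
      * exact (Hsu a Ha).
      * exact (Hsep a b Ha Hb Hab).
Qed.

Lemma separation_horizon (c : R) (S : list X) : orbit_separated c S ->
  exists n, forall a b, In a S -> In b S -> a <> b ->
    exists t, (t < n)%nat /\ c < d (Nat.iter t f a) (Nat.iter t f b).
Proof.
  intros Hsep.
  destruct (uniform_bound
              (fun ab t => fst ab <> snd ab ->
                           c < d (Nat.iter t f (fst ab)) (Nat.iter t f (snd ab)))
              (list_prod S S)) as [n Hn].
  - intros [a b] Hab. apply in_prod_iff in Hab as [Ha Hb]. simpl.
    destruct (classic (a = b)) as [-> | Hne].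
    + exists 0%nat. intros C. contradiction C. reflexivity.
    + destruct (Hsep a b Ha Hb Hne) as [t Ht]. exists t. intros _. exact Ht.
  - exists n. intros a b Ha Hb Hne.
    destruct (Hn (a, b) (in_prod S S a b Ha Hb)) as [t [Ht Hq]].
    exists t. split; [exact Ht | exact (Hq Hne)].
Qed.

Variable g : X -> X.
Hypotheses (gf : forall x, g (f x) = x) (fg : forall x, f (g x) = x).

Lemma iter_cancel (j : nat) (x : X) : Nat.iter j g (Nat.iter j f x) = x.
Proof.
  induction j as [|j IH]; [reflexivity|].
  rewrite Nat.iter_succ_r, Nat.iter_succ, gf. exact IH.
Qed.

Lemma zpow_nat (m : nat) (x : X) : zpow f g (Z.of_nat m) x = Nat.iter m f x.
Proof. destruct m; [reflexivity|]. simpl. rewrite SuccNat2Pos.id_succ. reflexivity. Qed.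

Lemma zpow_neg_nat (m : nat) (x : X) : zpow f g (- Z.of_nat m) x = Nat.iter m g x.
Proof. destruct m; [reflexivity|]. simpl. rewrite SuccNat2Pos.id_succ. reflexivity. Qed.

Lemma zpow_succ (k : Z) (x : X) : f (zpow f g k x) = zpow f g (k + 1) x.
Proof.
  destruct (Z_lt_le_dec k 0) as [Hk | Hk].
  - replace k with (- Z.of_nat (S (Z.to_nat (- k - 1))))%Z by lia.
    replace (- Z.of_nat (S (Z.to_nat (- k - 1))) + 1)%Z
      with (- Z.of_nat (Z.to_nat (- k - 1)))%Z by lia.
    rewrite !zpow_neg_nat, Nat.iter_succ. apply fg.
  - replace k with (Z.of_nat (Z.to_nat k)) by lia.
    replace (Z.of_nat (Z.to_nat k) + 1)%Z with (Z.of_nat (S (Z.to_nat k))) by lia.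
    rewrite !zpow_nat. reflexivity.
Qed.

(* Shadowing of glued orbits: the backward orbit of v followed by the
   forward orbit of a point p delta-close to v is followed, in both time
   directions, by a single true orbit. *)
Lemma glued_orbit_shadowing : shadowing d f g ->
  forall eps, 0 < eps -> exists delta, 0 < delta /\
    forall p v, d v p < delta -> exists y,
      (forall k, d (Nat.iter k f y) (Nat.iter k f p) < eps) /\
      (forall j, d (Nat.iter (S j) g y) (Nat.iter (S j) g v) < eps).
Proof.
  intros Hsh eps Heps.
  destruct (Hsh eps Heps) as [delta [Hdelta Hshadow]].
  exists delta. split; [exact Hdelta|]. intros p v Hpv.
  set (xs := fun k => if (k <? 0)%Z then zpow f g k v else zpow f g k p).
  destruct (Hshadow xs) as [y Hy].
  - intros k. unfold xs.
    destruct (Z.ltb_spec k 0), (Z.ltb_spec (k + 1) 0); rewrite zpow_succ;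
      try (rewrite dist_refl; exact Hdelta); try lia.
    replace (k + 1)%Z with 0%Z by lia. exact Hpv.
  - exists y. split.
    + intros k. specialize (Hy (Z.of_nat k)). unfold xs in Hy.
      destruct (Z.ltb_spec (Z.of_nat k) 0); [lia|].
      rewrite !zpow_nat in Hy. exact Hy.
    + intros j. specialize (Hy (- Z.of_nat (S j))%Z). unfold xs in Hy.
      destruct (Z.ltb_spec (- Z.of_nat (S j)) 0); [|lia].
      rewrite !zpow_neg_nat in Hy. exact Hy.
Qed.

End Dynamics.

Theorem theoremF (X : Type) (d : X -> X -> R) (f g : X -> X) :
  is_metric d ->
  compact_space d ->
  homeomorphism d f ->
  (forall x, g (f x) = x) -> (forall x, f (g x) = x) ->
  pos_finite_expansive d f ->
  shadowing d f g ->
  finite_type X.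
Proof.
  intros Hm Hcomp _ gf fg [c [Hc Hfin]] Hsh.
  apply NNPP. intros Hinf.
  destruct (glued_orbit_shadowing X d Hm f g fg Hsh (c / 2)) as [delta [Hdelta Hglue]];
    [lra|].
  destruct (finite_net X d Hm Hcomp delta Hdelta) as [P HP].
  destruct (finite_union (stable_set d f c) P Hfin) as [L HL].
  destruct (large_separated_family X d Hm f c (Rlt_le _ _ Hc) Hfin Hinf (S (length L)))
    as [Fam [Hlen [Hnd Hsep]]].
  destruct (separation_horizon X d f c Fam Hsep) as [n Hn].
  (* a |-> y, where y shadows the glued orbit through f^n a. *)
  assert (Hle : (length Fam <= length L)%nat).
  { apply (relation_pigeonhole
             (fun a y => forall t, (t < n)%nat ->
                d (Nat.iter (n - t) g y) (Nat.iter t f a) < c / 2)); [exact Hnd | |].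
    - intros a _. destruct (HP (Nat.iter n f a)) as [p [Hp Hpv]].
      rewrite (Defs.dist_sym d Hm) in Hpv.
      destruct (Hglue p (Nat.iter n f a) Hpv) as [y [Hfwd Hbwd]].
      exists y. split.
      + apply (HL p y Hp). intros k. rewrite (Defs.dist_sym d Hm). specialize (Hfwd k). lra.
      + intros t Ht. specialize (Hbwd (n - t - 1)%nat).
        replace (S (n - t - 1))%nat with (n - t)%nat in Hbwd by lia.
        rewrite <- (iter_cancel X f g gf (n - t) (Nat.iter t f a)), <- Nat.iter_add.
        replace (n - t + t)%nat with n by lia. exact Hbwd.
    - intros a a' y Ha Ha' Hay Ha'y. apply NNPP. intros Hne.
      destruct (Hn a a' Ha Ha' Hne) as [t [Ht Hsept]].
      pose proof (not_separated_of_common_near X d Hm _ _ _ c (Hay t Ht) (Ha'y t Ht)).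
      lra. }
  lia.
Qed.
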